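(* Assume the setting in the context. For all $\boldsymbol\gamma\in(0,\infty)^n$ and $\gamma\in(0,2\beta)$, the composition $T_{1,\boldsymbol\gamma}T_{2,\gamma}$ is $\alpha$-averaged with $\alpha=\max\big(\tfrac23,\tfrac{2}{1+2\beta/\gamma}\big)$.
   Context: $\mathcal H$ is a real Hilbert space, $n\ge1$, $(\omega_i)_{i=1}^n\in(0,1)^n$ with $\sum_i\omega_i=1$; $A_1,\dots,A_n:\mathcal H\to2^{\mathcal H}$ are maximal monotone; $B:\mathcal H\to\mathcal H$ is single-valued and $\beta\in(0,\infty)$ is such that $\beta B$ is firmly nonexpansive. Resolvent $J_A=(\mathrm{Id}+A)^{-1}$, reflection $R_A=2J_A-\mathrm{Id}$. An operator $T$ is $\alpha$-averaged ($\alpha\in(0,1)$) if $T=(1-\alpha)\mathrm{Id}+\alpha R$ with $R$ nonexpansive; firmly nonexpansive means $\tfrac12$-averaged. Product space: $\boldsymbol{\mathcal H}=\mathcal H^n$ with inner product $\langle\!\langle\mathbf x,\mathbf y\rangle\!\rangle=\sum_i\omega_i\langle x_i,y_i\rangle$; $\mathbf S=\{\mathbf x: x_1=\dots=x_n\}$; $N_{\mathbf S}(\mathbf x)=\mathbf S^\perp$ if $\mathbf x\in\mathbf S$ and $\emptyset$ otherwise. For $\boldsymbol\gamma=(\gamma_i)\in(0,\infty)^n$, $\boldsymbol\gamma\mathbf A:\mathbf x\mapsto\prod_i\gamma_iA_i(x_i)$; $\mathbf B\mathbf x=(Bx_i)_i$. $T_{1,\boldsymbol\gamma}=\tfrac12[R_{\boldsymbol\gamma\mathbf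 A}R_{N_{\mathbf S}}+\mathrm{Id}]$, $T_{2,\gamma}=\mathrm{Id}-\gamma\mathbf BJ_{N_{\mathbf S}}$. *)

From Stdlib Require Import Reals.
From mathcomp Require Import all_boot.

Set Implicit Arguments.
Unset Strict Implicit.

Open Scope R_scope.

Record Hilbert := MkHilbert {
  hcar :> Type;
  hzero : hcar;
  hadd : hcar -> hcar -> hcar;
  hopp : hcar -> hcar;
  hscal : R -> hcar -> hcar;
  hinner : hcar -> hcar -> R;
  hadd_assoc : forall x y z, hadd x (hadd y z) = hadd (hadd x y) z;
  hadd_comm : forall x y, hadd x y = hadd y x;
  hadd_zero : forall x, hadd x hzero = x;
  hadd_opp : forall x, hadd x (hopp x) = hzero;
  hscal_assoc : forall a b x, hscal a (hscal b x) = hscal (a * b) x;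
  hscal_one : forall x, hscal 1 x = x;
  hscal_distr_vec : forall a x y, hscal a (hadd x y) = hadd (hscal a x) (hscal a y);
  hscal_distr_sc : forall a b x, hscal (a + b) x = hadd (hscal a x) (hscal b x);
  hinner_sym : forall x y, hinner x y = hinner y x;
  hinner_add_l : forall x y z, hinner (hadd x y) z = hinner x z + hinner y z;
  hinner_scal_l : forall a x y, hinner (hscal a x) y = a * hinner x y;
  hinner_pos : forall x, 0 <= hinner x x;
  hinner_def : forall x, hinner x x = 0 -> x = hzero;
  hcomplete : forall u : nat -> hcar,
    (forall eps, 0 < eps -> exists N, forall p q, (N <= p)%nat -> (N <= q)%nat ->
        sqrt (hinner (hadd (u p) (hopp (u q))) (hadd (u p) (hopp (u q)))) < eps) ->
    exists l, forall eps, 0 < eps -> exists N, forall p, (N <= p)%nat ->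
        sqrt (hinner (hadd (u p) (hopp l)) (hadd (u p) (hopp l))) < eps
}.

Arguments hzero {h}.
Arguments hadd {h}.
Arguments hopp {h}.
Arguments hscal {h}.
Arguments hinner {h}.

Definition hsub {H : Hilbert} (x y : H) : H := hadd x (hopp y).
Definition hnorm {H : Hilbert} (x : H) : R := sqrt (hinner x x).
Definition hlin {H : Hilbert} (a : R) (x : H) (b : R) (y : H) : H :=
  hadd (hscal a x) (hscal b y).

(* Set-valued operators X -> 2^X are relations: M x u  <->  u \in M x.    *)

Definition averaged_rel {X : Type} (lin : R -> X -> R -> X -> X)
    (dist : X -> X -> R) (alpha : R) (T : X -> X -> Prop) : Prop :=
  0 < alpha < 1 /\
  exists Rn : X -> X,
    (forall x y, dist (Rn x) (Rn y) <= dist x y) /\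
    (forall x z, T x z <-> z = lin (1 - alpha) x alpha (Rn x)).

Definition averaged {X : Type} (lin : R -> X -> R -> X -> X)
    (dist : X -> X -> R) (alpha : R) (T : X -> X) : Prop :=
  averaged_rel lin dist alpha (fun x z => z = T x).

Definition firmly_nonexpansive {X : Type} (lin : R -> X -> R -> X -> X)
    (dist : X -> X -> R) (T : X -> X) : Prop :=
  averaged lin dist (1/2) T.

(* resolvent J_M = (Id + M)^{-1}:  y \in J_M x  <->  x \in y + M y *)
Definition resolvent {X : Type} (lin : R -> X -> R -> X -> X)
    (M : X -> X -> Prop) : X -> X -> Prop :=
  fun x y => exists m, M y m /\ x = lin 1 y 1 m.

Definition reflection {X : Type} (lin : R -> X -> R -> X -> X)
    (M : X -> X -> Prop) : X -> X -> Prop :=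
  fun x z => exists y, resolvent lin M x y /\ z = lin 2 y (-1) x.

Definition monotone {H : Hilbert} (A : H -> H -> Prop) : Prop :=
  forall x u y v, A x u -> A y v -> 0 <= hinner (hsub x y) (hsub u v).

Definition maximal_monotone {H : Hilbert} (A : H -> H -> Prop) : Prop :=
  monotone A /\
  forall M : H -> H -> Prop, monotone M ->
    (forall x u, A x u -> M x u) -> (forall x u, M x u -> A x u).

Definition prodH (H : Hilbert) (n : nat) := 'I_n -> H.

Definition plin {H : Hilbert} {n : nat} (a : R) (x : prodH H n) (b : R)
    (y : prodH H n) : prodH H n := fun i => hlin a (x i) b (y i).

Definition pinner {H : Hilbert} {n : nat} (w : 'I_n -> R)
    (x y : prodH H n) : R :=
  \big[Rplus/0]_(i < n) (w i * hinner (x i) (y i)).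

Definition pdist {H : Hilbert} {n : nat} (w : 'I_n -> R)
    (x y : prodH H n) : R :=
  sqrt (pinner w (plin 1 x (-1) y) (plin 1 x (-1) y)).

Definition diagS {H : Hilbert} {n : nat} (x : prodH H n) : Prop :=
  forall i j, x i = x j.

Definition diagS_perp {H : Hilbert} {n : nat} (w : 'I_n -> R)
    (u : prodH H n) : Prop :=
  forall s, diagS s -> pinner w s u = 0.

Definition normal_cone_S {H : Hilbert} {n : nat} (w : 'I_n -> R)
    (x u : prodH H n) : Prop :=
  diagS x /\ diagS_perp w u.

Definition scaled_prod_op {H : Hilbert} {n : nat} (g : 'I_n -> R)
    (A : 'I_n -> H -> H -> Prop) (x u : prodH H n) : Prop :=
  forall i, exists a, A i (x i) a /\ u i = hscal (g i) a.

Definition prod_fun {H : Hilbert} {n : nat} (B : H -> H) (x : prodH H n)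
    : prodH H n := fun i => B (x i).

(* T_{1,gamma} = 1/2 [ R_{gamma A} R_{N_S} + Id ] *)
Definition T1 {H : Hilbert} {n : nat} (w : 'I_n -> R) (g : 'I_n -> R)
    (A : 'I_n -> H -> H -> Prop) : prodH H n -> prodH H n -> Prop :=
  fun x z => exists y v,
    reflection plin (normal_cone_S w) x y /\
    reflection plin (scaled_prod_op g A) y v /\
    z = plin (1/2) v (1/2) x.

(* T_{2,gamma} = Id - gamma B J_{N_S} *)
Definition T2 {H : Hilbert} {n : nat} (w : 'I_n -> R) (gam : R)
    (B : H -> H) : prodH H n -> prodH H n -> Prop :=
  fun x z => exists p,
    resolvent plin (normal_cone_S w) x p /\
    z = plin 1 x (- gam) (prod_fun B p).

(* composition of (set-valued) operators: (T U) x = T (U x) *)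
Definition rel_comp {X : Type} (T U : X -> X -> Prop) : X -> X -> Prop :=
  fun x z => exists y, U x y /\ T y z.


(** Proof outline.
    - Minty's theorem (via minimisation of a Fitzpatrick-type energy, using
      completeness of [H]) makes the resolvent of [gam A] an everywhere
      defined single-valued map [J]; monotonicity makes it firmly
      nonexpansive.  The resolvent of the normal cone [N_S] is the projection
      onto the diagonal.  Hence [T_1 = (R_J R_P + Id) / 2] is a half-average
      of a nonexpansive map, i.e. firmly nonexpansive.
    - If [beta B] is firmly nonexpansive, [B] is [beta]-cocoercive, so
      [T_2 = Id - gam B P] satisfies the averagedness inequality with
      constant [2 beta / gam - 1].
    - The Ogura-Yamada composition rule for averagedness inequalities gives
      a constant for [T_1 T_2] that dominates [(1 - alpha) / alpha]; the
      inequality form then yields [alpha]-averagedness. *)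

From HB Require Import structures.
From Stdlib Require Import Reals Lra Psatz ClassicalEpsilon Classical FunctionalExtensionality.
From mathcomp Require Import all_boot.
Open Scope R_scope.
Set Implicit Arguments.
Unset Strict Implicit.

(** Real addition as a commutative monoid law, so that the generic bigop
    lemmas apply to the finite sums [\big[Rplus/0]] of the statement. *)
HB.instance Definition _ := Monoid.isComLaw.Build R 0 Rplus
  (fun a b c => esym (Rplus_assoc a b c)) Rplus_comm Rplus_0_l.

Section InnerProductAlgebra.
Variable H : Hilbert.
Implicit Types x y z : H.

Lemma hinner_zero_l y : hinner hzero y = 0.
Proof. have := hinner_add_l hzero hzero y; rewrite hadd_zero; lra. Qed.

Lemma hinner_opp_l x y : hinner (hopp x) y = - hinner x y.
Proof. have := hinner_add_l x (hopp x) y; rewrite hadd_opp hinner_zero_l; lra. Qed.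

Lemma hinner_add_r x y z : hinner x (hadd y z) = hinner x y + hinner x z.
Proof. by rewrite hinner_sym hinner_add_l !(hinner_sym _ x). Qed.

Lemma hinner_scal_r a x y : hinner x (hscal a y) = a * hinner x y.
Proof. by rewrite hinner_sym hinner_scal_l (hinner_sym y). Qed.

Lemma hinner_opp_r x y : hinner x (hopp y) = - hinner x y.
Proof. by rewrite hinner_sym hinner_opp_l (hinner_sym y). Qed.

Lemma hinner_zero_r y : hinner y hzero = 0.
Proof. by rewrite hinner_sym hinner_zero_l. Qed.

(** Two vectors are equal as soon as they have the same inner products with
    every vector; this turns vector identities into real identities. *)
Lemma hilbert_ext x y : (forall z, hinner x z = hinner y z) -> x = y.
Proof.
move=> E.
have Hd : hadd x (hopp y) = hzero.
  by apply: hinner_def; rewrite hinner_add_l hinner_opp_l !E; lra.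
have Hy : hadd (hopp y) y = hzero by rewrite hadd_comm hadd_opp.
by rewrite -[x]hadd_zero -Hy hadd_assoc Hd hadd_comm hadd_zero.
Qed.

Lemma inner_small_bound (d W : H) e :
  0 < e -> hinner d d <= e * e -> - hinner d W <= e * (1 + hinner W W) / 2.
Proof.
move=> he hd.
have := hinner_pos (hadd d (hscal e W)).
rewrite !(hinner_add_l, hinner_add_r, hinner_scal_l, hinner_scal_r) (hinner_sym W d).
nra.
Qed.

End InnerProductAlgebra.

Ltac inner_expand := rewrite /hlin /hsub; repeat progress rewrite
  ?hinner_add_l ?hinner_scal_l ?hinner_opp_l ?hinner_zero_l
  ?hinner_add_r ?hinner_scal_r ?hinner_opp_r ?hinner_zero_r.

Lemma hilbert_complete (H : Hilbert) (Y : nat -> H) :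
  (forall e, 0 < e -> exists N, forall p q, (N <= p)%nat -> (N <= q)%nat ->
     hinner (hsub (Y p) (Y q)) (hsub (Y p) (Y q)) < e) ->
  exists l, forall e, 0 < e -> exists N, forall p, (N <= p)%nat ->
     hinner (hsub (Y p) l) (hsub (Y p) l) < e.
Proof.
move=> hY.
have [l hl] : exists l, forall e, 0 < e -> exists N, forall p, (N <= p)%nat ->
    sqrt (hinner (hsub (Y p) l) (hsub (Y p) l)) < e.
  apply: hcomplete => e he.
  have [N hN] := hY (e * e) ltac:(nra).
  exists N => p q hp hq.
  have := sqrt_lt_1_alt _ _ (conj (hinner_pos _) (hN p q hp hq)).
  rewrite sqrt_square //; lra.
exists l => e he.
have [N hN] := hl (sqrt e) (sqrt_lt_R0 _ he).
by exists N => p hp; apply: sqrt_lt_0_alt; exact: hN p hp.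
Qed.

Lemma le_of_small_slack (a b D : R) :
  0 <= D -> (forall e, 0 < e < 1 -> a <= b + e * D) -> a <= b.
Proof.
move=> hD h; apply: Rnot_lt_le => hlt.
pose e := (a - b) / (D + (a - b) + 1).
have hden : 0 < D + (a - b) + 1 by lra.
have he : e * (D + (a - b) + 1) = a - b by rewrite /e; field; lra.
have he0 : 0 < e by apply: Rdiv_lt_0_compat; lra.
have he1 : e < 1 by apply: (Rmult_lt_reg_r (D + (a - b) + 1)) => //; lra.
have := h e (conj he0 he1); nra.
Qed.

Lemma inv_succ_small (e : R) :
  0 < e -> exists N, forall k, (N <= k)%nat -> / (INR k + 1) < e.
Proof.
move=> he; have [N [hN hN0]] := archimed_cor1 e he.
exists N => k /leP hk.
have hN0' : 0 < INR N := lt_0_INR _ hN0.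
have := le_INR _ _ hk => hkN.
apply: (Rle_lt_trans _ (/ INR N)) => //.
by apply: Rinv_le_contravar; lra.
Qed.

(** * Minty's theorem

    For a maximal monotone [A], the Fitzpatrick inequality [fitz_le x u c]
    says that [<x, v> + <y, u> - <y, v> <= c] on the graph of [A].  The set of
    such triples is convex and closed, it contains [(y, v, <y, v>)] for [(y, v)]
    in the graph, and maximality forces [<x, u> <= c] on it.  Minimising the
    coercive convex "energy" [c + |x|^2/2 + |u|^2/2] over it (a minimising
    sequence is Cauchy by the parallelogram law) yields [(xs, us, cs)] whose
    first-order optimality condition shows that [(-us, -xs)] lies in the graph
    with [xs + us = 0]; hence [0] is in the range of [Id + A]. *)

Section Minty.
Variables (H : Hilbert) (A : H -> H -> Prop).
Hypothesis hA : maximal_monotone A.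

Lemma maximal_monotone_in (x u : H) :
  (forall y v, A y v -> 0 <= hinner (hsub x y) (hsub u v)) -> A x u.
Proof.
move=> hrel; have [hmon hmax] := hA.
pose M := fun a b => A a b \/ (a = x /\ b = u).
apply: (hmax M); last by right.
- move=> a b c d [hab|[-> ->]] [hcd|[-> ->]].
  + exact: hmon.
  + by have := hrel _ _ hab; inner_expand; lra.
  + exact: hrel.
  + by inner_expand; lra.
- by move=> ? ? ?; left.
Qed.

Definition fitz_le (x u : H) (c : R) : Prop :=
  forall y v, A y v -> hinner x v + hinner y u - hinner y v <= c.

Definition energy (x u : H) (c : R) : R := c + hinner x x / 2 + hinner u u / 2.

Lemma fitz_le_graph (y v : H) : A y v -> fitz_le y v (hinner y v).
Proof. by move=> hyv y' v' h'; have := hA.1 _ _ _ _ hyv h'; inner_expand; lra. Qed.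

Lemma fitz_le_convex (x u x' u' : H) (c c' l : R) :
  0 <= l <= 1 -> fitz_le x u c -> fitz_le x' u' c' ->
  fitz_le (hlin (1 - l) x l x') (hlin (1 - l) u l u') ((1 - l) * c + l * c').
Proof.
move=> hl h h' y v hyv.
have := Rmult_le_compat_l (1 - l) _ _ ltac:(lra) (h _ _ hyv).
have := Rmult_le_compat_l l _ _ ltac:(lra) (h' _ _ hyv).
inner_expand; lra.
Qed.

(** Maximality: the Fitzpatrick function dominates the duality pairing. *)
Lemma fitz_le_inner (x u : H) (c : R) : fitz_le x u c -> hinner x u <= c.
Proof.
move=> hf; apply: Rnot_lt_le => hlt.
have hx : A x u.
  apply: maximal_monotone_in => y v hyv.
  by have := hf _ _ hyv; inner_expand; rewrite (hinner_sym y u); lra.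
by have := hf _ _ hx; lra.
Qed.

Lemma energy_nonneg (x u : H) (c : R) : fitz_le x u c -> 0 <= energy x u c.
Proof.
move=> /fitz_le_inner hc; have := hinner_pos (hadd x u).
by rewrite /energy; inner_expand; rewrite (hinner_sym u x); lra.
Qed.

Lemma fitz_le_closed (x u : H) (c : R) :
  (forall e, 0 < e < 1 -> exists x' u' c', fitz_le x' u' c' /\
     hinner (hsub x' x) (hsub x' x) <= e * e /\
     hinner (hsub u' u) (hsub u' u) <= e * e /\
     energy x' u' c' <= energy x u c + e) ->
  fitz_le x u c.
Proof.
move=> happrox y v hyv.
set Wx := hadd x v; set Wu := hadd y u.
apply: (le_of_small_slack (D := 1 + (1 + hinner Wx Wx) / 2 + (1 + hinner Wu Wu) / 2)).
  by have := hinner_pos Wx; have := hinner_pos Wu; lra.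
move=> e he; have [x' [u' [c' [hf [hx [hu hE]]]]]] := happrox e he.
have := hf _ _ hyv.
have := inner_small_bound Wx (proj1 he) hx.
have := inner_small_bound Wu (proj1 he) hu.
have := hinner_pos (hsub x' x); have := hinner_pos (hsub u' u).
move: hE; rewrite /energy /Wx /Wu; inner_expand.
rewrite (hinner_sym x x') (hinner_sym u u') (hinner_sym u' y) (hinner_sym u y).
lra.
Qed.

(** Parallelogram law: near-minimisers of the energy are close. *)
Lemma near_minimizers_close (m : R) (x u x' u' : H) (c c' : R) :
  (forall x u c, fitz_le x u c -> m <= energy x u c) ->
  fitz_le x u c -> fitz_le x' u' c' ->
  hinner (hsub x x') (hsub x x') + hinner (hsub u u') (hsub u u')
    <= 4 * (energy x u c - m + (energy x' u' c' - m)).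
Proof.
move=> hm h h'.
have := hm _ _ _ (fitz_le_convex (l := 1/2) ltac:(lra) h h').
by rewrite /energy; inner_expand; rewrite (hinner_sym x' x) (hinner_sym u' u); lra.
Qed.

Lemma graph_nonempty : exists y v, A y v.
Proof.
apply: NNPP => hne; apply: (hne); exists hzero, hzero.
by apply: maximal_monotone_in => y v hyv; exfalso; apply: hne; exists y, v.
Qed.

Lemma energy_infimum : exists m,
  (forall x u c, fitz_le x u c -> m <= energy x u c) /\
  (forall e, 0 < e -> exists x u c, fitz_le x u c /\ energy x u c < m + e).
Proof.
pose E := fun r => exists x u c, fitz_le x u c /\ r = - energy x u c.
have hbound : bound E.
  by exists 0 => r [x [u [c [hf ->]]]]; have := energy_nonneg hf; lra.
have hne : exists r, E r.
  have [y [v hyv]] := graph_nonempty.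
  by exists (- energy y v (hinner y v)), y, v, (hinner y v); split => //; apply: fitz_le_graph.
have [M [hub hleast]] := completeness E hbound hne.
exists (- M); split.
- by move=> x u c hf; have := hub _ (ex_intro _ x (ex_intro _ u (ex_intro _ c (conj hf erefl)))); lra.
- move=> e he; apply: NNPP => hno.
  have : M <= - (- M + e).
    apply: hleast => r [x [u [c [hf ->]]]]; apply: Rnot_lt_le => hlt.
    by apply: hno; exists x, u, c; split => //; lra.
  lra.
Qed.

Lemma minimizing_sequence_limit (m : R) (X U : nat -> H) (C : nat -> R) :
  (forall x u c, fitz_le x u c -> m <= energy x u c) ->
  (forall k, fitz_le (X k) (U k) (C k) /\ energy (X k) (U k) (C k) < m + / (INR k + 1)) ->
  exists xs us cs, fitz_le xs us cs /\ energy xs us cs = m.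
Proof.
move=> hm hseq.
have hcauchy : forall j k, hinner (hsub (X j) (X k)) (hsub (X j) (X k))
    + hinner (hsub (U j) (U k)) (hsub (U j) (U k)) <= 4 * (/ (INR j + 1) + / (INR k + 1)).
  move=> j k; have [hj hEj] := hseq j; have [hk hEk] := hseq k.
  by have := near_minimizers_close hm hj hk; lra.
have hcauchy_seq : forall e, 0 < e -> exists N, forall j k, (N <= j)%nat -> (N <= k)%nat ->
    hinner (hsub (X j) (X k)) (hsub (X j) (X k))
    + hinner (hsub (U j) (U k)) (hsub (U j) (U k)) < e.
  move=> e he; have [N hN] := inv_succ_small (e := e / 8) ltac:(lra).
  by exists N => j k hj hk; have := hN _ hj; have := hN _ hk; have := hcauchy j k; lra.
have [xs hxs] : exists xs, forall e, 0 < e -> exists N, forall p, (N <= p)%nat ->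
    hinner (hsub (X p) xs) (hsub (X p) xs) < e.
  apply: hilbert_complete => e he; have [N hN] := hcauchy_seq e he.
  by exists N => p q hp hq; have := hN p q hp hq; have := hinner_pos (hsub (U p) (U q)); lra.
have [us hus] : exists us, forall e, 0 < e -> exists N, forall p, (N <= p)%nat ->
    hinner (hsub (U p) us) (hsub (U p) us) < e.
  apply: hilbert_complete => e he; have [N hN] := hcauchy_seq e he.
  by exists N => p q hp hq; have := hN p q hp hq; have := hinner_pos (hsub (X p) (X q)); lra.
exists xs, us, (m - hinner xs xs / 2 - hinner us us / 2).
have hE : energy xs us (m - hinner xs xs / 2 - hinner us us / 2) = m by rewrite /energy; ring.
split => //; apply: fitz_le_closed => e he.
have he0 : 0 < e * e by nra.
have [N1 hN1] := hxs _ he0; have [N2 hN2] := hus _ he0.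
have [N3 hN3] := inv_succ_small (proj1 he).
pose k := maxn N3 (maxn N1 N2).
have hk1 : (N1 <= k)%nat by rewrite /k !leq_max leqnn orbT.
have hk2 : (N2 <= k)%nat by rewrite /k !leq_max leqnn !orbT.
have hk3 : (N3 <= k)%nat by rewrite /k leq_max leqnn.
have [hfk hEk] := hseq k.
exists (X k), (U k), (C k); split => //; rewrite hE.
have := hN1 _ hk1; have := hN2 _ hk2; have := hN3 _ hk3; lra.
Qed.

Lemma fitz_minimizer : exists xs us cs, fitz_le xs us cs /\
  forall x u c, fitz_le x u c -> energy xs us cs <= energy x u c.
Proof.
have [m [hm happ]] := energy_infimum.
have hstep : forall k, exists t : H * H * R, fitz_le t.1.1 t.1.2 t.2 /\
    energy t.1.1 t.1.2 t.2 < m + / (INR k + 1).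
  move=> k; have [x [u [c hc]]] := happ _ (RinvN_pos k).
  by exists (x, u, c).
pose t k := proj1_sig (constructive_indefinite_description _ (hstep k)).
have ht : forall k, fitz_le (t k).1.1 (t k).1.2 (t k).2 /\
    energy (t k).1.1 (t k).1.2 (t k).2 < m + / (INR k + 1).
  by move=> k; exact: (proj2_sig (constructive_indefinite_description _ (hstep k))).
have [xs [us [cs [hf hE]]]] := minimizing_sequence_limit hm ht.
by exists xs, us, cs; split => // x u c hc; rewrite hE; apply: hm.
Qed.

(** First-order optimality of a minimiser, tested along segments towards
    points of the graph. *)
Lemma minimizer_optimality (xs us : H) (cs : R) (y v : H) :
  fitz_le xs us cs -> (forall x u c, fitz_le x u c -> energy xs us cs <= energy x u c) ->
  A y v -> cs + hinner xs xs + hinner us us <= hinner y v + hinner xs y + hinner us v.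
Proof.
move=> hf hmin hyv.
apply: (le_of_small_slack (D := (hinner (hsub xs y) (hsub xs y) + hinner (hsub us v) (hsub us v)) / 2)).
  by have := hinner_pos (hsub xs y); have := hinner_pos (hsub us v); lra.
move=> l hl.
have := hmin _ _ _ (fitz_le_convex (l := l) ltac:(lra) hf (fitz_le_graph hyv)).
rewrite /energy; inner_expand.
rewrite (hinner_sym y xs) (hinner_sym v us).
nra.
Qed.

Lemma minty_zero : exists y a, A y a /\ hadd y a = hzero.
Proof.
have [xs [us [cs [hf hmin]]]] := fitz_minimizer.
have hcs := fitz_le_inner hf.
have hopt := fun y v => minimizer_optimality (y := y) (v := v) hf hmin.
have hin : A (hopp us) (hopp xs).
  apply: maximal_monotone_in => y v hyv.
  have := hopt _ _ hyv; have := hinner_pos (hadd xs us); inner_expand.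
  by rewrite (hinner_sym us xs) (hinner_sym y xs); lra.
have hz : hadd xs us = hzero.
  apply: hinner_def; apply: Rle_antisym; last exact: hinner_pos.
  by have := hopt _ _ hin; inner_expand; rewrite (hinner_sym us xs); lra.
exists (hopp us), (hopp xs); split => //.
apply: hilbert_ext => z; have := congr1 (fun p => hinner p z) hz.
by inner_expand; lra.
Qed.

End Minty.

Lemma maximal_monotone_shift (H : Hilbert) (A : H -> H -> Prop) (gam : R) (x : H) :
  maximal_monotone A -> 0 < gam ->
  maximal_monotone (fun y u => exists a, A y a /\ u = hadd (hscal gam a) (hopp x)).
Proof.
move=> [hmon hmax] hg; split.
- move=> y u y' u' [a [ha ->]] [a' [ha' ->]].
  have := Rmult_le_pos _ _ (Rlt_le _ _ hg) (hmon _ _ _ _ ha ha').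
  by inner_expand; lra.
- move=> M hM hsub y u hyu.
  pose M' := fun y a => M y (hadd (hscal gam a) (hopp x)).
  have hM' : monotone M'.
    move=> p a q b hpa hqb; have := hM _ _ _ _ hpa hqb; inner_expand => h.
    by apply: (Rmult_le_reg_l gam) => //; lra.
  have e : u = hadd (hscal gam (hscal (/ gam) (hadd u x))) (hopp x).
    by apply: hilbert_ext => z; inner_expand; field; lra.
  exists (hscal (/ gam) (hadd u x)); split => //.
  apply: (hmax M' hM') => [p a hpa|]; first by apply: hsub; exists a.
  by rewrite /M' -e.
Qed.

Theorem minty (H : Hilbert) (A : H -> H -> Prop) (gam : R) (x : H) :
  maximal_monotone A -> 0 < gam ->
  exists y a, A y a /\ x = hlin 1 y 1 (hscal gam a).
Proof.
move=> hA hg.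
have [y [u [[a [ha ->]] h0]]] := minty_zero (maximal_monotone_shift x hA hg).
exists y, a; split => //.
by apply: hilbert_ext => z; have := congr1 (fun p => hinner p z) h0; inner_expand; lra.
Qed.

Lemma resolvent_firm (H : Hilbert) (A : H -> H -> Prop) (gam : R) (q q' a a' : H) :
  monotone A -> 0 < gam -> A q a -> A q' a' ->
  hinner (hlin 1 q (-1) q') (hlin 1 q (-1) q')
    <= hinner (hlin 1 q (-1) q') (hlin 1 (hlin 1 q 1 (hscal gam a)) (-1) (hlin 1 q' 1 (hscal gam a'))).
Proof.
move=> hmon hg ha ha'.
have := Rmult_le_pos _ _ (Rlt_le _ _ hg) (hmon _ _ _ _ ha ha').
by inner_expand; rewrite (hinner_sym q' q); lra.
Qed.

Lemma resolvent_unique (H : Hilbert) (A : H -> H -> Prop) (gam : R) (q q' a a' : H) :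
  monotone A -> 0 < gam -> A q a -> A q' a' ->
  hlin 1 q 1 (hscal gam a) = hlin 1 q' 1 (hscal gam a') -> q = q'.
Proof.
move=> hmon hg ha ha' e.
have := resolvent_firm hmon hg ha ha'; rewrite e.
have -> : hlin 1 (hlin 1 q' 1 (hscal gam a')) (-1) (hlin 1 q' 1 (hscal gam a')) = hzero.
  by apply: hilbert_ext => z; inner_expand; ring.
rewrite hinner_zero_r => hle.
have hz : hlin 1 q (-1) q' = hzero.
  by apply: hinner_def; apply: Rle_antisym => //; exact: hinner_pos.
by apply: hilbert_ext => z; have := congr1 (fun p => hinner p z) hz; inner_expand; lra.
Qed.

Lemma firmly_nonexpansive_cocoercive (H : Hilbert) (B : H -> H) (beta : R) :
  0 < beta ->
  firmly_nonexpansive (@hlin H) (fun x y => hnorm (hsub x y)) (fun x => hscal beta (B x)) ->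
  forall x y, beta * hinner (hlin 1 (B x) (-1) (B y)) (hlin 1 (B x) (-1) (B y))
      <= hinner (hlin 1 (B x) (-1) (B y)) (hlin 1 x (-1) y).
Proof.
move=> hb [_ [Rn [hRn hgraph]]] x y.
have ex : hscal beta (B x) = hlin (1 - 1/2) x (1/2) (Rn x) by apply/hgraph.
have ey : hscal beta (B y) = hlin (1 - 1/2) y (1/2) (Rn y) by apply/hgraph.
have hN : hinner (hsub (Rn x) (Rn y)) (hsub (Rn x) (Rn y)) <= hinner (hsub x y) (hsub x y).
  by apply: sqrt_le_0; try exact: hinner_pos; exact: hRn.
have hfirm : hinner (hlin 1 (hscal beta (B x)) (-1) (hscal beta (B y)))
                    (hlin 1 (hscal beta (B x)) (-1) (hscal beta (B y)))
    <= hinner (hlin 1 (hscal beta (B x)) (-1) (hscal beta (B y))) (hlin 1 x (-1) y).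
  rewrite ex ey; move: hN; inner_expand.
  by rewrite (hinner_sym y x) (hinner_sym (Rn x) x) (hinner_sym (Rn y) x)
    (hinner_sym (Rn x) y) (hinner_sym (Rn y) y) (hinner_sym (Rn y) (Rn x)); lra.
move: hfirm; inner_expand; rewrite (hinner_sym (B y) (B x)) => hfirm.
by apply: (Rmult_le_reg_l beta) => //; lra.
Qed.

(** * The weighted product space [H^n]

    For
    single-valued maps [F] we use three quantitative notions: nonexpansiveness,
    [beta]-cocoercivity, and the inequality form [averaged_ineq k F] of
    averagedness, [|Fx - Fy|^2 + k |(x - Fx) - (y - Fy)|^2 <= |x - y|^2],
    which for [k = (1 - alpha) / alpha] is equivalent to [F] being
    [alpha]-averaged. *)

Lemma sum_scale n (c : R) (F : 'I_n -> R) :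
  \big[Rplus/0]_(i < n) (c * F i) = c * \big[Rplus/0]_(i < n) F i.
Proof.
by symmetry; apply: (big_morph (fun t => c * t)) => [a b|]; rewrite ?Rmult_plus_distr_l ?Rmult_0_r.
Qed.

Section ProductSpace.
Variables (H : Hilbert) (n : nat) (w : 'I_n -> R).
Hypothesis hw0 : forall i, 0 <= w i.

Local Notation X := (prodH H n).

Definition psq (x : X) : R := pinner w x x.
Definition pdiff (x y : X) : X := plin 1 x (-1) y.

Lemma pinner_plin_l a (x : X) b y z :
  pinner w (plin a x b y) z = a * pinner w x z + b * pinner w y z.
Proof.
rewrite /pinner -!sum_scale -big_split; apply: eq_bigr => i _.
by rewrite /plin /hlin hinner_add_l !hinner_scal_l /=; ring.
Qed.

Lemma pinner_sym (x y : X) : pinner w x y = pinner w y x.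
Proof. by apply: eq_bigr => i _; rewrite hinner_sym. Qed.

Lemma pinner_plin_r a (x : X) b y z :
  pinner w z (plin a x b y) = a * pinner w z x + b * pinner w z y.
Proof. by rewrite pinner_sym pinner_plin_l !(pinner_sym _ z). Qed.

Lemma psq_nonneg (x : X) : 0 <= psq x.
Proof.
apply: (big_ind (fun a => 0 <= a)) => [|a b|i _]; try lra.
by apply: Rmult_le_pos => //; exact: hinner_pos.
Qed.

Definition nonexpansive (F : X -> X) : Prop :=
  forall x y, psq (pdiff (F x) (F y)) <= psq (pdiff x y).

Definition cocoercive (beta : R) (F : X -> X) : Prop :=
  forall x y, beta * psq (pdiff (F x) (F y)) <= pinner w (pdiff (F x) (F y)) (pdiff x y).

Definition averaged_ineq (k : R) (F : X -> X) : Prop :=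
  forall x y, psq (pdiff (F x) (F y)) + k * psq (pdiff (pdiff x y) (pdiff (F x) (F y)))
    <= psq (pdiff x y).

Definition reflect (F : X -> X) (x : X) : X := plin 2 (F x) (-1) x.
Definition half_avg (Rf : X -> X) (x : X) : X := plin (1/2) (Rf x) (1/2) x.
Definition forward_step (gam : R) (G : X -> X) (x : X) : X := plin 1 x (- gam) (G x).

End ProductSpace.

Ltac pinner_expand := rewrite /psq /pdiff; repeat progress rewrite ?pinner_plin_l ?pinner_plin_r.

Ltac prod_ext := apply: functional_extensionality => ?; apply: hilbert_ext => ?;
  rewrite /plin /pdiff /reflect /half_avg /forward_step; inner_expand; field;
  repeat split; lra.

(** * Calculus of averaged maps on [H^n] *)

Section AveragedCalculus.
Variables (H : Hilbert) (n : nat) (w : 'I_n -> R).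
Hypothesis hw0 : forall i, 0 <= w i.

Local Notation X := (prodH H n).
Local Notation psq := (psq w).

Lemma psq_weighted_sum (k1 k2 : R) (p q : X) :
  0 < k1 -> 0 < k2 ->
  k1 * k2 / (k1 + k2) * psq (plin 1 p 1 q) <= k2 * psq p + k1 * psq q.
Proof.
move=> h1 h2.
have hsq := psq_nonneg hw0 (plin k2 p (- k1) q).
apply: (Rmult_le_reg_l (k1 + k2)); first lra.
have -> : (k1 + k2) * (k1 * k2 / (k1 + k2) * psq (plin 1 p 1 q))
    = k1 * k2 * psq (plin 1 p 1 q) by field; lra.
move: hsq; pinner_expand; rewrite (pinner_sym w q p); nra.
Qed.

(** Composition of averaged maps (Ogura-Yamada): the constants combine like
    resistors in series. *)
Lemma averaged_ineq_comp (k1 k2 : R) (F1 F2 : X -> X) :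
  0 < k1 -> 0 < k2 -> averaged_ineq w k1 F1 -> averaged_ineq w k2 F2 ->
  averaged_ineq w (k1 * k2 / (k1 + k2)) (fun x => F1 (F2 x)).
Proof.
move=> h1 h2 hF1 hF2 x y.
set u := pdiff x y; set e := pdiff (F2 x) (F2 y); set b := pdiff (F1 (F2 x)) (F1 (F2 y)).
have -> : pdiff u b = plin 1 (pdiff u e) 1 (pdiff e b) by rewrite /u /e /b; prod_ext.
have := psq_weighted_sum (pdiff u e) (pdiff e b) h1 h2.
have := hF1 (F2 x) (F2 y); have := hF2 x y.
rewrite -/u -/e -/b; lra.
Qed.

Lemma averaged_ineq_weaken (k k' : R) (F : X -> X) :
  0 <= k' <= k -> averaged_ineq w k F -> averaged_ineq w k' F.
Proof.
move=> hk hF x y; have := hF x y.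
have := Rmult_le_compat_r _ _ _ (psq_nonneg hw0 (pdiff (pdiff x y) (pdiff (F x) (F y)))) (proj2 hk).
lra.
Qed.

Lemma nonexpansive_comp (F G : X -> X) :
  nonexpansive w F -> nonexpansive w G -> nonexpansive w (fun x => F (G x)).
Proof. by move=> hF hG x y; apply: Rle_trans (hF _ _) (hG _ _). Qed.

Lemma reflect_nonexpansive (J : X -> X) :
  cocoercive w 1 J -> nonexpansive w (reflect J).
Proof.
move=> hJ x y.
have -> : pdiff (reflect J x) (reflect J y) = plin 2 (pdiff (J x) (J y)) (-1) (pdiff x y) by prod_ext.
have := hJ x y; move: (pdiff (J x) (J y)) (pdiff x y) => j u.
by rewrite /psq; pinner_expand; rewrite (pinner_sym w u j); lra.
Qed.

Lemma half_avg_averaged (Rf : X -> X) :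
  nonexpansive w Rf -> averaged_ineq w 1 (half_avg Rf).
Proof.
move=> hR x y.
have -> : pdiff (half_avg Rf x) (half_avg Rf y) = plin (1/2) (pdiff (Rf x) (Rf y)) (1/2) (pdiff x y)
  by prod_ext.
have -> : pdiff (pdiff x y) (plin (1/2) (pdiff (Rf x) (Rf y)) (1/2) (pdiff x y))
    = plin (-(1/2)) (pdiff (Rf x) (Rf y)) (1/2) (pdiff x y) by prod_ext.
have := hR x y; move: (pdiff (Rf x) (Rf y)) (pdiff x y) => r u.
by rewrite /psq; pinner_expand; rewrite (pinner_sym w u r); lra.
Qed.

Lemma forward_step_averaged (beta gam : R) (G : X -> X) :
  0 < gam -> cocoercive w beta G -> averaged_ineq w (2 * beta / gam - 1) (forward_step gam G).
Proof.
move=> hg hG x y.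
have -> : pdiff (forward_step gam G x) (forward_step gam G y)
    = plin 1 (pdiff x y) (- gam) (pdiff (G x) (G y)) by prod_ext.
have -> : pdiff (pdiff x y) (plin 1 (pdiff x y) (- gam) (pdiff (G x) (G y)))
    = plin 0 (pdiff x y) gam (pdiff (G x) (G y)) by prod_ext.
have := hG x y; move: (pdiff (G x) (G y)) (pdiff x y) => d u hcoco.
have := Rmult_le_compat_l (2 * gam) _ _ ltac:(lra) hcoco.
rewrite /psq; pinner_expand; rewrite (pinner_sym w d u).
move: (pinner w u u) (pinner w u d) (pinner w d d) => UU UD DD.
have -> : (2 * beta / gam - 1) * (0 * (0 * UU + gam * UD) + gam * (0 * UD + gam * DD))
    = (2 * beta * gam - gam * gam) * DD by field; lra.
lra.
Qed.

(** The averagedness inequality with [k = (1 - alpha) / alpha] yields an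
    [alpha]-averaged map: [Rn = (F - (1 - alpha) Id) / alpha] is nonexpansive. *)
Lemma averaged_of_ineq (alpha : R) (F : X -> X) :
  0 < alpha < 1 -> averaged_ineq w ((1 - alpha) / alpha) F -> averaged plin (pdist w) alpha F.
Proof.
move=> ha hF; split => //.
exists (fun x => plin (1 / alpha) (F x) (- (1 - alpha) / alpha) x); split; last first.
  move=> x z; have e : F x = plin (1 - alpha) x alpha (plin (1 / alpha) (F x) (- (1 - alpha) / alpha) x)
    by prod_ext.
  by split => ->.
move=> x y; apply: sqrt_le_1_alt; change (plin 1 x (-1) y) with (pdiff x y).
have -> : plin 1 (plin (1 / alpha) (F x) (- (1 - alpha) / alpha) x) (-1)
                 (plin (1 / alpha) (F y) (- (1 - alpha) / alpha) y)
    = plin (1 / alpha) (pdiff (F x) (F y)) (- (1 - alpha) / alpha) (pdiff x y) by prod_ext.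
have := hF x y; move: (pdiff (F x) (F y)) (pdiff x y) => b u.
rewrite /psq; pinner_expand; rewrite (pinner_sym w u b).
set BB := pinner w b b; set UU := pinner w u u; set UB := pinner w b u => hineq.
have hUU : 0 <= UU := psq_nonneg hw0 u.
have hscaled : BB - 2 * (1 - alpha) * UB <= (2 * alpha - 1) * UU.
  have := Rmult_le_compat_l alpha _ _ (Rlt_le _ _ (proj1 ha)) hineq.
  have -> : alpha * (BB + (1 - alpha) / alpha * (1 * (1 * UU + -1 * UB) + -1 * (1 * UB + -1 * BB)))
      = alpha * BB + (1 - alpha) * (UU - 2 * UB + BB) by field; lra.
  nra.
apply: (Rmult_le_reg_l (alpha * alpha)); first nra.
have -> : alpha * alpha * (1 / alpha * (1 / alpha * BB + - (1 - alpha) / alpha * UB)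
      + - (1 - alpha) / alpha * (1 / alpha * UB + - (1 - alpha) / alpha * UU))
    = BB - 2 * (1 - alpha) * UB + (1 - alpha) * (1 - alpha) * UU by field; lra.
lra.
Qed.

End AveragedCalculus.

(** * The diagonal subspace and the normal cone resolvent

    With weights summing to one, the resolvent of [N_S] is the orthogonal
    projection onto the diagonal [S], which replaces every component by the
    weighted average [wavg w x]. *)

Section Diagonal.
Variables (H : Hilbert) (n : nat) (w : 'I_n -> R).
Hypothesis hw1 : \big[Rplus/0]_(i < n) w i = 1.

Local Notation X := (prodH H n).

Definition wavg (x : X) : H := \big[hadd/hzero]_(i < n) hscal (w i) (x i).
Definition diag_proj (x : X) : X := fun _ => wavg x.

Lemma wavg_inner_l (x : X) (z : H) :
  hinner (wavg x) z = \big[Rplus/0]_(i < n) (w i * hinner (x i) z).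
Proof.
rewrite /wavg (big_morph (fun v => hinner v z) (id1 := 0) (op1 := Rplus)).
- by apply: eq_bigr => i _; rewrite hinner_scal_l.
- by move=> a b; rewrite hinner_add_l.
- by rewrite hinner_zero_l.
Qed.

Lemma wavg_const (c : H) : wavg (fun _ => c) = c.
Proof.
apply: hilbert_ext => z; rewrite wavg_inner_l.
by rewrite (eq_bigr (fun i => hinner c z * w i)) ?sum_scale ?hw1 => [|i _]; ring.
Qed.

Lemma wavg_plin a (x : X) b (y : X) : wavg (plin a x b y) = hlin a (wavg x) b (wavg y).
Proof.
apply: hilbert_ext => z; rewrite wavg_inner_l /hlin hinner_add_l !hinner_scal_l !wavg_inner_l.
rewrite -!sum_scale -big_split; apply: eq_bigr => i _.
by rewrite /plin; inner_expand; rewrite /=; ring.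
Qed.

Lemma pinner_const_l (c : H) (v : X) : pinner w (fun _ => c) v = hinner c (wavg v).
Proof. by rewrite hinner_sym wavg_inner_l; apply: eq_bigr => i _; rewrite hinner_sym. Qed.

(** The projection onto the diagonal is firmly nonexpansive (indeed
    [<P e, e> = |P e|^2]). *)
Lemma diag_proj_cocoercive : cocoercive w 1 diag_proj.
Proof.
move=> x y.
have -> : pdiff (diag_proj x) (diag_proj y) = diag_proj (pdiff x y).
  by apply: functional_extensionality => i; rewrite /diag_proj /pdiff wavg_plin.
by rewrite /psq !pinner_const_l wavg_const; lra.
Qed.

(** The resolvent of [N_S] is the diagonal projection (for [n >= 1]). *)
Lemma resolvent_normal_cone (i0 : 'I_n) (x p : X) :
  resolvent plin (normal_cone_S w) x p <-> p = diag_proj x.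
Proof.
split.
- move=> [m [[hdiag hperp] hx]].
  apply: functional_extensionality => i; apply: hilbert_ext => z.
  have hm0 := hperp (fun _ => z) (fun _ _ => erefl).
  rewrite pinner_const_l in hm0.
  have -> : hinner (diag_proj x i) z = hinner (wavg (plin 1 (fun _ => p i) 1 m)) z.
    by rewrite hx; congr (hinner (wavg (plin 1 _ 1 m)) z);
       apply: functional_extensionality => j; exact: hdiag.
  by rewrite wavg_plin wavg_const; inner_expand; rewrite (hinner_sym (wavg m) z) hm0; ring.
- move=> ->; exists (plin 1 x (-1) (diag_proj x)); split; first split.
  + by move=> ? ?.
  + move=> s hs.
    have -> : s = fun _ => s i0 by apply: functional_extensionality => j; exact: hs.
    by rewrite pinner_const_l wavg_plin /diag_proj wavg_const; inner_expand; ring.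
  + by prod_ext.
Qed.

Lemma diag_cocoercive_lift (B : H -> H) (beta : R) :
  (forall x y, beta * hinner (hlin 1 (B x) (-1) (B y)) (hlin 1 (B x) (-1) (B y))
      <= hinner (hlin 1 (B x) (-1) (B y)) (hlin 1 x (-1) y)) ->
  cocoercive w beta (fun x => prod_fun B (diag_proj x)).
Proof.
move=> hB x y.
have -> : pdiff (prod_fun B (diag_proj x)) (prod_fun B (diag_proj y))
    = fun _ => hlin 1 (B (wavg x)) (-1) (B (wavg y)) by [].
by rewrite /psq !pinner_const_l wavg_const /pdiff wavg_plin; exact: hB.
Qed.

End Diagonal.

(** * The resolvent of [gam A] on [H^n] *)

Section ScaledResolvent.
Variables (H : Hilbert) (n : nat) (w : 'I_n -> R) (g : 'I_n -> R).
Variable A : 'I_n -> H -> H -> Prop.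
Hypothesis hA : forall i, maximal_monotone (A i).
Hypothesis hg : forall i, 0 < g i.

Local Notation X := (prodH H n).

Lemma scaled_resolvent_component (x q : X) :
  resolvent plin (scaled_prod_op g A) x q ->
  forall i, exists a, A i (q i) a /\ x i = hlin 1 (q i) 1 (hscal (g i) a).
Proof.
move=> [m [hm hx]] i; have [a [ha hmi]] := hm i.
by exists a; split => //; rewrite hx /plin hmi.
Qed.

(** Minty's theorem and uniqueness make the resolvent a total function [J]. *)
Lemma scaled_resolvent_function :
  exists J : X -> X, forall x q, resolvent plin (scaled_prod_op g A) x q <-> q = J x.
Proof.
have hex : forall x i, exists qa : H * H, A i qa.1 qa.2 /\ x i = hlin 1 qa.1 1 (hscal (g i) qa.2).
  by move=> x i; have [y [a [ha e]]] := minty (x i) (hA i) (hg i); exists (y, a).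
pose qa x i := proj1_sig (constructive_indefinite_description _ (hex x i)).
have hqa : forall x i, A i (qa x i).1 (qa x i).2 /\ x i = hlin 1 (qa x i).1 1 (hscal (g i) (qa x i).2).
  by move=> x i; exact: (proj2_sig (constructive_indefinite_description _ (hex x i))).
exists (fun x i => (qa x i).1) => x q; split.
- move=> hq; apply: functional_extensionality => i.
  have [a [ha e]] := scaled_resolvent_component hq i; have [ha' e'] := hqa x i.
  by apply: (resolvent_unique (hA i).1 (hg i) ha ha'); rewrite -e -e'.
- move=> ->; exists (fun i => hscal (g i) (qa x i).2); split.
  + by move=> i; exists (qa x i).2; split => //; exact: (hqa x i).1.
  + by apply: functional_extensionality => i; exact: (hqa x i).2.
Qed.

Lemma scaled_resolvent_cocoercive (J : X -> X) :
  (forall i, 0 <= w i) -> (forall x, resolvent plin (scaled_prod_op g A) x (J x)) ->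
  cocoercive w 1 J.
Proof.
move=> hw0 hJ x y; rewrite Rmult_1_l.
apply: (big_ind2 (fun a b => a <= b)) => [|a b c d|i _]; try lra.
have [a [ha ex]] := scaled_resolvent_component (hJ x) i.
have [b [hb ey]] := scaled_resolvent_component (hJ y) i.
apply: Rmult_le_compat_l => //; rewrite /pdiff /plin ex ey.
exact: resolvent_firm (hA i).1 (hg i) ha hb.
Qed.

End ScaledResolvent.

Lemma rel_comp_graph (X : Type) (T U : X -> X -> Prop) (F G : X -> X) :
  (forall x z, T x z <-> z = F x) -> (forall x z, U x z <-> z = G x) ->
  forall x z, rel_comp T U x z <-> z = F (G x).
Proof.
move=> hT hU x z; split.
- by move=> [y [/hU -> /hT ->]].
- by move=> ->; exists (G x); split; [apply/hU | apply/hT].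
Qed.

Lemma averaged_rel_graph (X : Type) (lin : R -> X -> R -> X -> X) (dist : X -> X -> R)
    (alpha : R) (T : X -> X -> Prop) (F : X -> X) :
  (forall x z, T x z <-> z = F x) -> averaged lin dist alpha F -> averaged_rel lin dist alpha T.
Proof.
move=> hT [ha [Rn [hRn hF]]]; split => //.
by exists Rn; split => // x z; rewrite hT; exact: hF.
Qed.

Section Splitting.
Variables (H : Hilbert) (n : nat) (w : 'I_n -> R).
Hypothesis hw1 : \big[Rplus/0]_(i < n) w i = 1.
Variable i0 : 'I_n.

Lemma T2_graph (gam : R) (B : H -> H) (x z : prodH H n) :
  T2 w gam B x z <-> z = forward_step gam (fun y => prod_fun B (diag_proj w y)) x.
Proof.
split.
- by move=> [p [/(resolvent_normal_cone hw1 i0) -> ->]].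
- by move=> ->; exists (diag_proj w x); split => //; apply/(resolvent_normal_cone hw1 i0).
Qed.

Lemma T1_graph (g : 'I_n -> R) (A : 'I_n -> H -> H -> Prop) (J : prodH H n -> prodH H n) :
  (forall x q, resolvent plin (scaled_prod_op g A) x q <-> q = J x) ->
  forall x z, T1 w g A x z <-> z = half_avg (fun y => reflect J (reflect (diag_proj w) y)) x.
Proof.
move=> hJ x z; split.
- by move=> [y [v [[p [/(resolvent_normal_cone hw1 i0) -> ->]] [[q [/hJ -> ->]] ->]]]].
- move=> ->; exists (reflect (diag_proj w) x), (reflect J (reflect (diag_proj w) x)).
  split; last split => //.
  + by exists (diag_proj w x); split => //; apply/(resolvent_normal_cone hw1 i0).
  + by exists (J (reflect (diag_proj w) x)); split => //; apply/hJ.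
Qed.

End Splitting.

(** The averagedness constant of the theorem dominates the Ogura-Yamada
    constant [1 / (2 - 1/s)] of the composition, where [s = 2 beta / gam]. *)
Lemma alpha_bounds (s : R) : 1 < s ->
  let alpha := Rmax (2 / 3) (2 / (1 + s)) in
  0 < alpha < 1 /\ 0 <= (1 - alpha) / alpha <= 1 * (s - 1) / (1 + (s - 1)).
Proof.
move=> hs alpha.
have -> : 1 * (s - 1) / (1 + (s - 1)) = (s - 1) / s by field; lra.
rewrite /alpha /Rmax; case: Rle_dec => h.
- have hs2 : s <= 2.
    have e : 2 / (1 + s) * (1 + s) = 2 by field; lra.
    by have := Rmult_le_compat_r (1 + s) _ _ ltac:(lra) h; rewrite e; lra.
  have -> : (1 - 2 / (1 + s)) / (2 / (1 + s)) = (s - 1) / 2 by field; lra.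
  have h1 : 2 / (1 + s) < 1 by apply: (Rmult_lt_reg_r (1 + s)); [lra | field_simplify; lra].
  split; first lra.
  split; first lra.
  apply: (Rmult_le_reg_r (2 * s)); first lra.
  by field_simplify; [nra | lra].
- have hs2 : 2 < s.
    apply: Rnot_le_lt => hc; apply: h.
    apply: (Rmult_le_reg_r (1 + s)); first lra.
    by field_simplify; lra.
  have -> : (1 - 2 / 3) / (2 / 3) = 1 / 2 by field.
  split; first lra.
  split; first lra.
  apply: (Rmult_le_reg_r (2 * s)); first lra.
  by field_simplify; lra.
Qed.

Theorem proposition4p5
  (H : Hilbert) (n : nat) (hn : (1 <= n)%nat)
  (w : 'I_n -> R)
  (hw : forall i, 0 < w i < 1)
  (hw1 : \big[Rplus/0]_(i < n) w i = 1)
  (A : 'I_n -> H -> H -> Prop)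
  (hA : forall i, maximal_monotone (A i))
  (B : H -> H) (beta : R) (hbeta : 0 < beta)
  (hB : firmly_nonexpansive (@hlin H) (fun x y => hnorm (hsub x y))
          (fun x => hscal beta (B x))) :
  forall (g : 'I_n -> R) (gam : R),
    (forall i, 0 < g i) ->
    0 < gam < 2 * beta ->
    averaged_rel plin (pdist w)
      (Rmax (2/3) (2 / (1 + 2 * beta / gam)))
      (rel_comp (T1 w g A) (T2 w gam B)).
Proof.
move=> g gam hg hgam.
have hw0 : forall i, 0 <= w i by move=> i; have := hw i; lra.
pose i0 : 'I_n := Ordinal hn.
have [J hJ] := scaled_resolvent_function hA hg.
have hs : 1 < 2 * beta / gam.
  by apply: (Rmult_lt_reg_r gam); [lra | field_simplify; lra].
have [halpha hk] := alpha_bounds hs.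
(* T_1 is firmly nonexpansive: half-average of two composed reflections. *)
have hT1 : averaged_ineq w 1 (half_avg (fun y => reflect J (reflect (diag_proj w) y))).
  apply/half_avg_averaged/nonexpansive_comp; apply: reflect_nonexpansive => //.
    by apply: (scaled_resolvent_cocoercive hA hg hw0) => x; apply/hJ.
  exact: diag_proj_cocoercive.
(* T_2 is a forward step along the beta-cocoercive map B J_{N_S}. *)
have hT2 : averaged_ineq w (2 * beta / gam - 1)
    (forward_step gam (fun y => prod_fun B (diag_proj w y))).
  apply: forward_step_averaged; first lra.
  exact/(diag_cocoercive_lift hw1)/firmly_nonexpansive_cocoercive.
apply: (averaged_rel_graph (rel_comp_graph (T1_graph hw1 i0 hJ) (T2_graph hw1 i0 gam B))).
apply: (averaged_of_ineq hw0 halpha); apply: (averaged_ineq_weaken hw0 hk).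
by apply: averaged_ineq_comp => //; lra.
Qed.
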